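(* Let $\alpha,\beta,\gamma,\delta,\epsilon,\zeta,\kappa,\lambda,\mu,b,c,f,m$ be parameters, and let $$A_0=\begin{pmatrix}\alpha&\beta&\gamma\\\delta&\epsilon&\zeta\\\kappa&\lambda&\mu\end{pmatrix},\qquad A_1=\begin{pmatrix}\alpha_1&\beta_1&\gamma_1\\\delta_1&\epsilon_1&\zeta_1\\\kappa_1&\lambda_1&\mu_1\end{pmatrix},$$ where $\alpha_1=2\alpha^2f-c\alpha\delta+\beta\delta b-b\alpha\epsilon$, $\beta_1=2f\alpha\beta+b\gamma\delta-c\alpha\epsilon-b\alpha\zeta$, $\gamma_1=2f\alpha\gamma-c\alpha\zeta$, $\delta_1=2m\alpha^2-2c\alpha\kappa+2b\beta\kappa-2b\alpha\lambda$, $\epsilon_1=2m\alpha\beta+2b\gamma\kappa-2c\alpha\lambda-2b\alpha\mu$, $\zeta_1=2m\alpha\gamma-2c\alpha\mu$, $\kappa_1=m\alpha\delta-2f\alpha\kappa+b\epsilon\kappa-b\delta\lambda$, $\lambda_1=m\alpha\epsilon+b\zeta\kappa-2f\alpha\lambda-b\delta\mu$, $\mu_1=m\alpha\zeta-2f\alpha\mu$. Put $\mathbf{X}=(x^2,x,1)^T$, $\mathbf{Y}=(y^2,y,1)^T$ and $I(x,y)=\dfrac{\mathbf{X}^TA_0\mathbf{Y}}{\mathbf{X}^TA_1\mathbf{Y}}$. Define $(g_1(x),g_2(x),g_3(x))^T=(A_0^T\mathbf{X})\times(A_1^T\mathbf{X})$ and the maps $$i_2:(x,y)\mapsto\left(x,\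 \frac{g_1(x)-g_2(x)y}{g_2(x)-g_3(x)y}\right),$$ $$h_1:(x,y)\mapsto\left(-\frac{(\delta y^2+\epsilon y+\zeta)x+2(\kappa y^2+\lambda y+\mu)}{2(\alpha y^2+\beta y+\gamma)x+\delta y^2+\epsilon y+\zeta},\ y\right),$$ $$h_2:(x,y)\mapsto\left(-\frac{(\delta_1 y^2+\epsilon_1 y+\zeta_1)x+2(\kappa_1 y^2+\lambda_1 y+\mu_1)}{2(\alpha_1 y^2+\beta_1 y+\gamma_1)x+\delta_1 y^2+\epsilon_1 y+\zeta_1},\ y\right).$$ Then $I\circ i_2=I$, $I\circ h_1=-I$ and $I\circ h_2=-I$.
   Context: $\times$ denotes the cross product of vectors in three-dimensional space; the entries of $(A_0^T\mathbf{X})\times(A_1^T\mathbf{X})$ are polynomials in $x$. *)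

From HB Require Import structures.
From mathcomp Require Import all_boot all_order all_algebra.
Set Implicit Arguments. Unset Strict Implicit. Unset Printing Implicit Defensive.
Import Order.TTheory GRing.Theory Num.Theory.
Local Open Scope ring_scope.

Definition vec3 {R : fieldType} (a b c : R) : 'cV[R]_3 :=
  \col_(i < 3) (if val i == 0%N then a else if val i == 1%N then b else c).

Definition mat3 {R : fieldType} (a11 a12 a13 a21 a22 a23 a31 a32 a33 : R)
  : 'M[R]_3 :=
  \matrix_(i < 3, j < 3)
    (if val i == 0%N then
       (if val j == 0%N then a11 else if val j == 1%N then a12 else a13)
     else if val i == 1%N then
       (if val j == 0%N then a21 else if val j == 1%N then a22 else a23)
     else
       (if val j == 0%N then a31 else if val j == 1%N then a32 else a33)).

Definition cross3 {R : fieldType} (u v : 'cV[R]_3) : 'cV[R]_3 :=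
  let u1 := u (inord 0) 0 in let u2 := u (inord 1) 0 in let u3 := u (inord 2) 0 in
  let v1 := v (inord 0) 0 in let v2 := v (inord 1) 0 in let v3 := v (inord 2) 0 in
  vec3 (u2 * v3 - u3 * v2) (u3 * v1 - u1 * v3) (u1 * v2 - u2 * v1).

Definition Xv {R : fieldType} (t : R) : 'cV[R]_3 := vec3 (t ^+ 2) t 1.

Definition bilin {R : fieldType} (A : 'M[R]_3) (x y : R) : R :=
  ((Xv x)^T *m A *m Xv y) 0 0.

Definition Iq {R : fieldType} (A0 A1 : 'M[R]_3) (x y : R) : R :=
  bilin A0 x y / bilin A1 x y.

Definition gvec {R : fieldType} (A0 A1 : 'M[R]_3) (x : R) : 'cV[R]_3 :=
  cross3 (A0^T *m Xv x) (A1^T *m Xv x).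
Definition g1 {R : fieldType} (A0 A1 : 'M[R]_3) x : R := gvec A0 A1 x (inord 0) 0.
Definition g2 {R : fieldType} (A0 A1 : 'M[R]_3) x : R := gvec A0 A1 x (inord 1) 0.
Definition g3 {R : fieldType} (A0 A1 : 'M[R]_3) x : R := gvec A0 A1 x (inord 2) 0.

From HB Require Import structures.
From mathcomp Require Import all_boot all_order all_algebra ring.
Set Implicit Arguments. Unset Strict Implicit. Unset Printing Implicit Defensive.
Import Order.TTheory GRing.Theory Num.Theory.
Local Open Scope ring_scope.

(** For fixed [y], [X^T A Y] is a quadratic in [x], and for fixed [x] a
    quadratic in [y]; each of the three maps moves one variable by a Möbius
    involution under which the numerator [p] and the denominator [q] of [I]
    are merely rescaled.

    [h1] is the harmonic conjugation with respect to the roots of [p]. It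
    multiplies [p] by [apolar p p] and, as soon as [p] and [q] are apolar
    ([apolar p q = 0]), multiplies [q] by [- apolar p p] (both up to the same
    square). The entries of [A1] are chosen exactly so that the [x]-quadratics
    of [A0] and [A1] are apolar for every [y]. Apolarity is symmetric, so the
    harmonic conjugation [h2] with respect to the roots of [q] flips the sign
    of [I] as well.

    [i2] exchanges the two roots of every quadratic [p - t q] of the pencil
    spanned by the [y]-quadratics with coefficient vectors [u = A0^T X] and
    [v = A1^T X]. It rescales by one common factor every quadratic whose
    coefficient vector is orthogonal to [u x v], in particular [p] and [q]. *)

Section QuadraticPairs.
Variable R : fieldType.

Definition quad (a d k x : R) : R := a * x ^+ 2 + d * x + k.

(* The polar form of the discriminant: [apolar a d k a d k = 4ak - d^2]. *)
Definition apolar (a d k a' d' k' : R) : R := 2 * k * a' - d * d' + 2 * a * k'.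

Lemma apolarC (a d k a' d' k' : R) :
  apolar a d k a' d' k' = apolar a' d' k' a d k.
Proof. by rewrite /apolar; ring. Qed.

Lemma quad_frac (a d k N D : R) : D != 0 ->
  quad a d k (N / D) = (a * N ^+ 2 + d * N * D + k * D ^+ 2) / D ^+ 2.
Proof. by move=> nzD; rewrite /quad; field. Qed.

(* For [a = 1], [d = 0], [k = -1] this is [x |-> 1/x], the harmonic conjugate
   with respect to [1] and [-1]. *)
Definition harmonic_conj (a d k x : R) : R := - (d * x + 2 * k) / (2 * a * x + d).

Lemma quad_harmonic_conj (a d k a' d' k' x : R) : 2 * a * x + d != 0 ->
  quad a' d' k' (harmonic_conj a d k x)
  = (2 * apolar a d k a' d' k' * quad a d k x - apolar a d k a d k * quad a' d' k' x)
    / (2 * a * x + d) ^+ 2.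
Proof. by move=> nzD; rewrite quad_frac // /apolar /quad; congr (_ / _); ring. Qed.

Lemma quad_harmonic_conj_self (a d k x : R) : 2 * a * x + d != 0 ->
  quad a d k (harmonic_conj a d k x)
  = apolar a d k a d k * quad a d k x / (2 * a * x + d) ^+ 2.
Proof. by move=> nzD; rewrite quad_harmonic_conj //; congr (_ / _); ring. Qed.

Lemma harmonic_conj_ratio (a d k a' d' k' x : R) :
  apolar a d k a' d' k' = 0 ->
  2 * a * x + d != 0 -> quad a' d' k' x != 0 ->
  let x' := harmonic_conj a d k x in
  quad a' d' k' x' != 0 ->
  quad a d k x' / quad a' d' k' x' = - (quad a d k x / quad a' d' k' x).
Proof.
move=> apq nzD nzq x'.
rewrite /x' quad_harmonic_conj_self // quad_harmonic_conj // apq => nzq'.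
have nzdisc : apolar a d k a d k != 0.
  by apply: contra nzq' => /eqP ->; rewrite !(mulr0, mul0r, subr0).
by field; rewrite oppr_eq0 mulf_eq0 negb_or nzq nzD nzdisc.
Qed.

Lemma harmonic_conj_ratio_swap (a d k a' d' k' x : R) :
  apolar a d k a' d' k' = 0 ->
  2 * a' * x + d' != 0 -> quad a' d' k' x != 0 ->
  let x' := harmonic_conj a' d' k' x in
  quad a' d' k' x' != 0 ->
  quad a d k x' / quad a' d' k' x' = - (quad a d k x / quad a' d' k' x).
Proof.
move=> apq nzD nzq x'.
rewrite /x' quad_harmonic_conj_self // quad_harmonic_conj // apolarC apq => nzq'.
have nzdisc : apolar a' d' k' a' d' k' != 0.
  by apply: contra nzq' => /eqP ->; rewrite !mul0r.
by field; rewrite nzq nzD nzdisc.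
Qed.

End QuadraticPairs.

Section Pencil.
Variables (R : fieldType) (u0 u1 u2 v0 v1 v2 : R).

Let c1 := u1 * v2 - u2 * v1.
Let c2 := u2 * v0 - u0 * v2.
Let c3 := u0 * v1 - u1 * v0.

Definition pencil_inv (y : R) : R := (c1 - c2 * y) / (c2 - c3 * y).

Lemma quad_pencil_inv (w0 w1 w2 y : R) :
  w0 * c1 + w1 * c2 + w2 * c3 = 0 -> c2 - c3 * y != 0 ->
  quad w0 w1 w2 (pencil_inv y)
  = (c2 ^+ 2 - c1 * c3) * quad w0 w1 w2 y / (c2 - c3 * y) ^+ 2.
Proof.
move=> wc nzD; rewrite quad_frac //; congr (_ / _); apply/eqP; rewrite -subr_eq0.
have -> : w0 * (c1 - c2 * y) ^+ 2 + w1 * (c1 - c2 * y) * (c2 - c3 * y)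
          + w2 * (c2 - c3 * y) ^+ 2 - (c2 ^+ 2 - c1 * c3) * quad w0 w1 w2 y
        = (w0 * c1 + w1 * c2 + w2 * c3) * (c3 * y ^+ 2 - 2 * c2 * y + c1).
  by rewrite /quad; ring.
by rewrite wc mul0r.
Qed.

Lemma pencil_inv_ratio (y : R) :
  c2 - c3 * y != 0 -> quad v0 v1 v2 y != 0 ->
  quad v0 v1 v2 (pencil_inv y) != 0 ->
  quad u0 u1 u2 (pencil_inv y) / quad v0 v1 v2 (pencil_inv y)
  = quad u0 u1 u2 y / quad v0 v1 v2 y.
Proof.
have uc : u0 * c1 + u1 * c2 + u2 * c3 = 0 by rewrite /c1 /c2 /c3; ring.
have vc : v0 * c1 + v1 * c2 + v2 * c3 = 0 by rewrite /c1 /c2 /c3; ring.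
move=> nzD nzv; rewrite !quad_pencil_inv // => nzv'.
have nzfactor : c2 ^+ 2 - c1 * c3 != 0.
  by apply: contra nzv' => /eqP ->; rewrite !mul0r.
by field; rewrite nzv nzD nzfactor.
Qed.

End Pencil.

Section Mat3.
Variable R : fieldType.

Lemma vec3E (a b c : R) :
  [/\ vec3 a b c (inord 0) 0 = a, vec3 a b c (inord 1) 0 = b
    & vec3 a b c (inord 2) 0 = c].
Proof. by rewrite !mxE /= !inordK. Qed.

Lemma cross3_vec3 (u0 u1 u2 v0 v1 v2 : R) :
  cross3 (vec3 u0 u1 u2) (vec3 v0 v1 v2)
  = vec3 (u1 * v2 - u2 * v1) (u2 * v0 - u0 * v2) (u0 * v1 - u1 * v0).
Proof.
by rewrite /cross3; have [-> -> ->] := vec3E u0 u1 u2; have [-> -> ->] := vec3E v0 v1 v2.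
Qed.

Lemma dot_vec3 (u0 u1 u2 w0 w1 w2 : R) :
  ((vec3 u0 u1 u2)^T *m vec3 w0 w1 w2) 0 0 = u0 * w0 + u1 * w1 + u2 * w2.
Proof. by rewrite !mxE !big_ord_recr big_ord0 /= !mxE /= add0r. Qed.

Lemma mat3_tr_Xv (a11 a12 a13 a21 a22 a23 a31 a32 a33 x : R) :
  (mat3 a11 a12 a13 a21 a22 a23 a31 a32 a33)^T *m Xv x
  = vec3 (quad a11 a21 a31 x) (quad a12 a22 a32 x) (quad a13 a23 a33 x).
Proof.
apply/matrixP => i j; rewrite !mxE !big_ord_recr big_ord0 /= !mxE /= /quad.
by case: i => [[|[|[|i]]] //= _]; ring.
Qed.

Lemma bilin_mat3_col (a11 a12 a13 a21 a22 a23 a31 a32 a33 x y : R) :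
  bilin (mat3 a11 a12 a13 a21 a22 a23 a31 a32 a33) x y
  = quad (quad a11 a21 a31 x) (quad a12 a22 a32 x) (quad a13 a23 a33 x) y.
Proof.
rewrite /bilin -[(Xv x)^T *m _]trmxK trmx_mul trmxK mat3_tr_Xv dot_vec3 /quad.
by ring.
Qed.

Lemma bilin_mat3 (a11 a12 a13 a21 a22 a23 a31 a32 a33 x y : R) :
  bilin (mat3 a11 a12 a13 a21 a22 a23 a31 a32 a33) x y
  = quad (quad a11 a12 a13 y) (quad a21 a22 a23 y) (quad a31 a32 a33 y) x.
Proof. by rewrite bilin_mat3_col /quad; ring. Qed.

Lemma g_mat3 (a11 a12 a13 a21 a22 a23 a31 a32 a33
              b11 b12 b13 b21 b22 b23 b31 b32 b33 x : R) :
  let A := mat3 a11 a12 a13 a21 a22 a23 a31 a32 a33 in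
  let B := mat3 b11 b12 b13 b21 b22 b23 b31 b32 b33 in
  let u0 := quad a11 a21 a31 x in let u1 := quad a12 a22 a32 x in
  let u2 := quad a13 a23 a33 x in
  let v0 := quad b11 b21 b31 x in let v1 := quad b12 b22 b32 x in
  let v2 := quad b13 b23 b33 x in
  [/\ g1 A B x = u1 * v2 - u2 * v1, g2 A B x = u2 * v0 - u0 * v2
    & g3 A B x = u0 * v1 - u1 * v0].
Proof. by rewrite /g1 /g2 /g3 /gvec !mat3_tr_Xv cross3_vec3; apply: vec3E. Qed.

End Mat3.

Theorem proposition2 (R : fieldType)
  (al be ga de ep ze ka la mu b c f m : R) :
  let al1 := 2 * al ^+ 2 * f - c * al * de + be * de * b - b * al * ep in
  let be1 := 2 * f * al * be + b * ga * de - c * al * ep - b * al * ze in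
  let ga1 := 2 * f * al * ga - c * al * ze in
  let de1 := 2 * m * al ^+ 2 - 2 * c * al * ka + 2 * b * be * ka - 2 * b * al * la in
  let ep1 := 2 * m * al * be + 2 * b * ga * ka - 2 * c * al * la - 2 * b * al * mu in
  let ze1 := 2 * m * al * ga - 2 * c * al * mu in
  let ka1 := m * al * de - 2 * f * al * ka + b * ep * ka - b * de * la in
  let la1 := m * al * ep + b * ze * ka - 2 * f * al * la - b * de * mu in
  let mu1 := m * al * ze - 2 * f * al * mu in
  let A0 := mat3 al be ga de ep ze ka la mu in
  let A1 := mat3 al1 be1 ga1 de1 ep1 ze1 ka1 la1 mu1 in
  let I := Iq A0 A1 in
  let i2 := fun x y : R =>
    (x, (g1 A0 A1 x - g2 A0 A1 x * y) / (g2 A0 A1 x - g3 A0 A1 x * y)) in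
  let h1 := fun x y : R =>
    (- ((de * y ^+ 2 + ep * y + ze) * x + 2 * (ka * y ^+ 2 + la * y + mu))
       / (2 * (al * y ^+ 2 + be * y + ga) * x + (de * y ^+ 2 + ep * y + ze)), y) in
  let h2 := fun x y : R =>
    (- ((de1 * y ^+ 2 + ep1 * y + ze1) * x + 2 * (ka1 * y ^+ 2 + la1 * y + mu1))
       / (2 * (al1 * y ^+ 2 + be1 * y + ga1) * x + (de1 * y ^+ 2 + ep1 * y + ze1)), y) in
  (forall x y : R,
     g2 A0 A1 x - g3 A0 A1 x * y != 0 ->
     bilin A1 x y != 0 ->
     bilin A1 (i2 x y).1 (i2 x y).2 != 0 ->
     I (i2 x y).1 (i2 x y).2 = I x y)
  /\
  (forall x y : R,
     2 * (al * y ^+ 2 + be * y + ga) * x + (de * y ^+ 2 + ep * y + ze) != 0 ->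
     bilin A1 x y != 0 ->
     bilin A1 (h1 x y).1 (h1 x y).2 != 0 ->
     I (h1 x y).1 (h1 x y).2 = - I x y)
  /\
  (forall x y : R,
     2 * (al1 * y ^+ 2 + be1 * y + ga1) * x + (de1 * y ^+ 2 + ep1 * y + ze1) != 0 ->
     bilin A1 x y != 0 ->
     bilin A1 (h2 x y).1 (h2 x y).2 != 0 ->
     I (h2 x y).1 (h2 x y).2 = - I x y).
Proof.
move=> al1 be1 ga1 de1 ep1 ze1 ka1 la1 mu1 A0 A1 I i2 h1 h2.
have apolar_A0_A1 y : apolar (quad al be ga y) (quad de ep ze y) (quad ka la mu y)
                         (quad al1 be1 ga1 y) (quad de1 ep1 ze1 y) (quad ka1 la1 mu1 y) = 0.
  by rewrite /apolar /quad /al1 /be1 /ga1 /de1 /ep1 /ze1 /ka1 /la1 /mu1; ring.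
split; [|split] => x y.
- rewrite /i2 /I /Iq /A0 /A1 /= !bilin_mat3_col.
  have [-> -> ->] := g_mat3 al be ga de ep ze ka la mu al1 be1 ga1 de1 ep1 ze1 ka1 la1 mu1 x.
  exact: pencil_inv_ratio.
- rewrite /h1 /I /Iq /A0 /A1 /= !bilin_mat3.
  exact: harmonic_conj_ratio (apolar_A0_A1 y).
- rewrite /h2 /I /Iq /A0 /A1 /= !bilin_mat3.
  exact: harmonic_conj_ratio_swap (apolar_A0_A1 y).
Qed.
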